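(* Let $s\geqslant0$. For every formula $\varphi$ of $TI_s$: if $TI_s\vdash\varphi$, then $TI_s^*\vdash(\bar\varphi)^*$, where $\bar\varphi$ is the universal closure of $\varphi$.
   Context: Language of $TI$: variables $x^n,y^n,z^n,\dots$ of each type $n\geqslant0$; constant $0$ and function symbols $S,+,\cdot$ on type 0; predicates $=_n$ and $\in_n$. Terms of type 0 are built from type-0 variables and $0$ by $S,+,\cdot$; terms of type $n\geqslant1$ are variables. Atomic formulas: $t=_nr$ ($t,r$ of type $n$) and $t\in_n\tau$ ($t$ of type $n$, $\tau$ of type $n+1$). $srt(\varphi)$ is the maximal type of free variables of $\varphi$. $TI$: classical predicate logic with equality and axioms $Sx^0\neq0$, $Sx=Sy\supset x=y$, $x+0=x$, $x+Sy=S(x+y)$, $x\cdot0=0$, $x\cdot Sy=x\cdot y+x$, induction on type 0 for all formulas, comprehension $\exists x^{n+1}\forall z^n(z\in x\equiv\varphi(z))$ for all $\varphi$ with $srt(\varphi)\leqslant n+1$ and $x^{n+1}$ not free in $\varphi$, and extensionality $\forall z^n(z\in x^{n+1}\equiv z\in y^{n+1})\supset x=y$. $TI_s$ is the fragment with all types $\leqslant s$; $TI_s^*$ is $TI_s$ without the extensionality axiom. The relation $x^n\approx_ny^n$: $x^0\approx_0y^0$ is $x=y$; $x^{n+1}\approx_{n+1}y^{n+1}$ is $(\forall z^n\in x)(\exists u^n\in y)(z\approx_nu)\wedge(\forall z^n\in y)(\exists u^n\in x)(z\approx_nu)$. Translation $\varphi\mapsto\varphi^*$: $(t=_n\tau)^*$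 is $t\approx_n\tau$; $(t\in_n\tau)^*$ is $(\exists z^n\in\tau)(z\approx_nt)$; $\bot^*=\bot$; $*$ commutes with $\wedge,\vee,\supset$ and with $\forall x^n,\exists x^n$. *)

(* Variables are typed de Bruijn indices:
   [Var n i] is the variable of type n with index i; each type has its
   own index space, and a quantifier [All n]/[Ex n] binds index 0 of type n. *)
From Stdlib Require Import Arith Bool List.
Import ListNotations.

Inductive tm : Type :=
| Var  (n i : nat)
| Zero
| Succ (t : tm)
| Plus (t u : tm)
| Mult (t u : tm).

Fixpoint tm_ty (n : nat) (t : tm) : Prop :=
  match t with
  | Var m _ => m = n
  | Zero => n = 0
  | Succ t1 => n = 0 /\ tm_ty 0 t1
  | Plus t1 t2 => n = 0 /\ tm_ty 0 t1 /\ tm_ty 0 t2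
  | Mult t1 t2 => n = 0 /\ tm_ty 0 t1 /\ tm_ty 0 t2
  end.

Inductive form : Type :=
| Eq  (n : nat) (t u : tm)
| Mem (n : nat) (t u : tm)
| Bot
| And (p q : form)
| Or  (p q : form)
| Imp (p q : form)
| All (n : nat) (p : form)
| Ex  (n : nat) (p : form).

Definition Neg (p : form) : form := Imp p Bot.
Definition Iff (p q : form) : form := And (Imp p q) (Imp q p).

Fixpoint wf (s : nat) (p : form) : Prop :=
  match p with
  | Eq n t u => n <= s /\ tm_ty n t /\ tm_ty n u
  | Mem n t u => S n <= s /\ tm_ty n t /\ tm_ty (S n) u
  | Bot => True
  | And p q | Or p q | Imp p q => wf s p /\ wf s q
  | All n p | Ex n p => n <= s /\ wf s p
  end.

Fixpoint lift_tm (m k : nat) (t : tm) : tm :=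
  match t with
  | Var n i => if Nat.eqb n m && Nat.leb k i then Var n (S i) else Var n i
  | Zero => Zero
  | Succ t1 => Succ (lift_tm m k t1)
  | Plus t1 t2 => Plus (lift_tm m k t1) (lift_tm m k t2)
  | Mult t1 t2 => Mult (lift_tm m k t1) (lift_tm m k t2)
  end.

Fixpoint lift (m k : nat) (p : form) : form :=
  match p with
  | Eq n t u => Eq n (lift_tm m k t) (lift_tm m k u)
  | Mem n t u => Mem n (lift_tm m k t) (lift_tm m k u)
  | Bot => Bot
  | And p q => And (lift m k p) (lift m k q)
  | Or p q => Or (lift m k p) (lift m k q)
  | Imp p q => Imp (lift m k p) (lift m k q)
  | All n p => All n (lift m (if Nat.eqb n m then S k else k) p)
  | Ex n p => Ex n (lift m (if Nat.eqb n m then S k else k) p)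
  end.

Fixpoint subst_tm (m k : nat) (r : tm) (t : tm) : tm :=
  match t with
  | Var n i =>
      if Nat.eqb n m then
        (if Nat.eqb i k then r else if Nat.ltb k i then Var n (pred i) else Var n i)
      else Var n i
  | Zero => Zero
  | Succ t1 => Succ (subst_tm m k r t1)
  | Plus t1 t2 => Plus (subst_tm m k r t1) (subst_tm m k r t2)
  | Mult t1 t2 => Mult (subst_tm m k r t1) (subst_tm m k r t2)
  end.

Fixpoint subst (m k : nat) (r : tm) (p : form) : form :=
  match p with
  | Eq n t u => Eq n (subst_tm m k r t) (subst_tm m k r u)
  | Mem n t u => Mem n (subst_tm m k r t) (subst_tm m k r u)
  | Bot => Bot
  | And p q => And (subst m k r p) (subst m k r q)
  | Or p q => Or (subst m k r p) (subst m k r q)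
  | Imp p q => Imp (subst m k r p) (subst m k r q)
  | All n p => All n (subst m (if Nat.eqb n m then S k else k) (lift_tm n 0 r) p)
  | Ex n p => Ex n (subst m (if Nat.eqb n m then S k else k) (lift_tm n 0 r) p)
  end.

Fixpoint occurs_tm (m i : nat) (t : tm) : Prop :=
  match t with
  | Var n j => n = m /\ j = i
  | Zero => False
  | Succ t1 => occurs_tm m i t1
  | Plus t1 t2 | Mult t1 t2 => occurs_tm m i t1 \/ occurs_tm m i t2
  end.

Fixpoint free (m i : nat) (p : form) : Prop :=
  match p with
  | Eq _ t u | Mem _ t u => occurs_tm m i t \/ occurs_tm m i u
  | Bot => False
  | And p q | Or p q | Imp p q => free m i p \/ free m i q
  | All n p | Ex n p => free m (if Nat.eqb n m then S i else i) p
  end.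

(* [fvb m p] : 1 + the largest index of a free type-m variable of p
   (0 if there is none) *)
Fixpoint fvb_tm (m : nat) (t : tm) : nat :=
  match t with
  | Var n i => if Nat.eqb n m then S i else 0
  | Zero => 0
  | Succ t1 => fvb_tm m t1
  | Plus t1 t2 | Mult t1 t2 => Nat.max (fvb_tm m t1) (fvb_tm m t2)
  end.

Fixpoint fvb (m : nat) (p : form) : nat :=
  match p with
  | Eq _ t u | Mem _ t u => Nat.max (fvb_tm m t) (fvb_tm m u)
  | Bot => 0
  | And p q | Or p q | Imp p q => Nat.max (fvb m p) (fvb m q)
  | All n p | Ex n p => if Nat.eqb n m then pred (fvb m p) else fvb m p
  end.

Definition uclose (s : nat) (p : form) : form :=
  fold_right (fun m q => Nat.iter (fvb m p) (All m) q) p (seq 0 (S s)).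

Inductive logax : form -> Prop :=
| LA1 p q : logax (Imp p (Imp q p))
| LA2 p q r : logax (Imp (Imp p (Imp q r)) (Imp (Imp p q) (Imp p r)))
| LA3 p q : logax (Imp (And p q) p)
| LA4 p q : logax (Imp (And p q) q)
| LA5 p q : logax (Imp p (Imp q (And p q)))
| LA6 p q : logax (Imp p (Or p q))
| LA7 p q : logax (Imp q (Or p q))
| LA8 p q r : logax (Imp (Imp p r) (Imp (Imp q r) (Imp (Or p q) r)))
| LA9 p : logax (Imp Bot p)
| LA10 p : logax (Imp (Neg (Neg p)) p)
| LQ1 n p t : tm_ty n t -> logax (Imp (All n p) (subst n 0 t p))
(* q -> forall x q   (x not free in q) *)
| LQ2 n q : logax (Imp q (All n (lift n 0 q)))
| LQ3 n p q : logax (Imp (All n (Imp p q)) (Imp (All n p) (All n q)))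
| LQ4 n p t : tm_ty n t -> logax (Imp (subst n 0 t p) (Ex n p))
(* forall x (p -> q) -> exists x p -> q   (x not free in q) *)
| LQ5 n p q : logax (Imp (All n (Imp p (lift n 0 q))) (Imp (Ex n p) q))
| LE1 n t : tm_ty n t -> logax (Eq n t t)
| LE2 n t u p : tm_ty n t -> tm_ty n u ->
    logax (Imp (Eq n t u) (Imp (subst n 0 t p) (subst n 0 u p))).

Definition x0 := Var 0 0.
Definition y0 := Var 0 1.

Inductive tiax (ext : bool) (s : nat) : form -> Prop :=
| TA_S0 : tiax ext s (Neg (Eq 0 (Succ x0) Zero))
| TA_Sinj : tiax ext s (Imp (Eq 0 (Succ x0) (Succ y0)) (Eq 0 x0 y0))
| TA_plus0 : tiax ext s (Eq 0 (Plus x0 Zero) x0)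
| TA_plusS : tiax ext s (Eq 0 (Plus x0 (Succ y0)) (Succ (Plus x0 y0)))
| TA_mult0 : tiax ext s (Eq 0 (Mult x0 Zero) Zero)
| TA_multS : tiax ext s (Eq 0 (Mult x0 (Succ y0)) (Plus (Mult x0 y0) x0))
(* induction on type 0:  p(0) /\ forall x (p(x) -> p(Sx)) -> forall x p(x),
   where x is the type-0 variable with index 0 of p *)
| TA_ind p : wf s p ->
    tiax ext s (Imp (And (subst 0 0 Zero p)
                         (All 0 (Imp p (subst 0 0 (Succ (Var 0 0)) (lift 0 1 p)))))
                    (All 0 p))
(* comprehension:  exists x^{n+1} forall z^n (z \in x <-> p(z)),
   srt(p) <= n+1, x not free in p; z is the type-n variable with index 0 of p *)
| TA_comp n p : S n <= s -> wf s p ->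
    (forall m i, free m i p -> m <= S n) ->
    tiax ext s (Ex (S n) (All n (Iff (Mem n (Var n 0) (Var (S n) 0))
                                     (lift (S n) 0 p))))
| TA_ext n : ext = true -> S n <= s ->
    tiax ext s (Imp (All n (Iff (Mem n (Var n 0) (Var (S n) 0))
                                (Mem n (Var n 0) (Var (S n) 1))))
                    (Eq (S n) (Var (S n) 0) (Var (S n) 1))).

Inductive Prov (ext : bool) (s : nat) : form -> Prop :=
| P_log p : logax p -> wf s p -> Prov ext s p
| P_ax p : tiax ext s p -> wf s p -> Prov ext s p
| P_mp p q : Prov ext s p -> Prov ext s (Imp p q) -> Prov ext s q
| P_gen n p : n <= s -> Prov ext s p -> Prov ext s (All n p).

Definition TI_prov (s : nat) (p : form) : Prop := Prov true s p.
Definition TIstar_prov (s : nat) (p : form) : Prop := Prov false s p.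

Fixpoint approx (n : nat) (t u : tm) : form :=
  match n with
  | 0 => Eq 0 t u
  | S k =>
      And
        (All k (Imp (Mem k (Var k 0) (lift_tm k 0 t))
                    (Ex k (And (Mem k (Var k 0) (lift_tm k 0 (lift_tm k 0 u)))
                               (approx k (Var k 1) (Var k 0))))))
        (All k (Imp (Mem k (Var k 0) (lift_tm k 0 u))
                    (Ex k (And (Mem k (Var k 0) (lift_tm k 0 (lift_tm k 0 t)))
                               (approx k (Var k 1) (Var k 0))))))
  end.

Fixpoint trans (p : form) : form :=
  match p with
  | Eq n t u => approx n t u
  | Mem n t u => Ex n (And (Mem n (Var n 0) (lift_tm n 0 u))
                           (approx n (Var n 0) (lift_tm n 0 t)))
  | Bot => Bot
  | And p q => And (trans p) (trans q)
  | Or p q => Or (trans p) (trans q)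
  | Imp p q => Imp (trans p) (trans q)
  | All n p => All n (trans p)
  | Ex n p => Ex n (trans p)
  end.

From Stdlib Require Import Arith Bool List Lia.
Import ListNotations.

(* The translation commutes with lifting and substitution, so it sends every
   logical axiom other than the equality axioms to an instance of the same
   axiom, and every induction axiom to an induction axiom.  Without using
   extensionality one proves that [approx] is an equivalence relation and that
   every translated formula respects it in each free variable; this covers the
   equality axioms.  A translated comprehension instance then follows from the
   comprehension instance of the translated formula, and translated
   extensionality holds outright, since sets with approx-equal elements are
   approx-equal by definition.  Induction on derivations gives
   TI_s^* |- phi^*, and the closure is added by generalization, which commutes
   with the translation. *)

Lemma eqb_Sn_n n : Nat.eqb (S n) n = false.
Proof. apply Nat.eqb_neq; lia. Qed.

Lemma eqb_n_Sn n : Nat.eqb n (S n) = false.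
Proof. apply Nat.eqb_neq; lia. Qed.

Ltac case_nat_tests := repeat match goal with
  | |- context [Nat.eqb ?a ?b] => destruct (Nat.eqb_spec a b)
  | |- context [Nat.leb ?a ?b] => destruct (Nat.leb_spec a b)
  | |- context [Nat.ltb ?a ?b] => destruct (Nat.ltb_spec a b)
  end.

Ltac var_crush :=
  repeat (cbn [lift_tm subst_tm andb Nat.pred] in *; case_nat_tests; subst);
  try lia; try congruence; auto.

Lemma tm_ty_lift n m k t : tm_ty n (lift_tm m k t) <-> tm_ty n t.
Proof.
  revert n; induction t; intros n'; cbn [lift_tm tm_ty];
    rewrite ?IHt, ?IHt1, ?IHt2; try tauto.
  destruct (Nat.eqb n m && Nat.leb k i); reflexivity.
Qed.

Lemma tm_ty_subst n m k r t : tm_ty n t -> tm_ty m r -> tm_ty n (subst_tm m k r t).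
Proof.
  revert n; induction t; intros n' Ht Hr; cbn [subst_tm tm_ty] in *; try intuition.
  subst; case_nat_tests; subst; cbn; auto.
Qed.

Lemma tm_ty_unique t n m : tm_ty n t -> tm_ty m t -> n = m.
Proof. destruct t; cbn; intuition congruence. Qed.

Lemma tm_ty_subst_inv n m k r t : tm_ty n (subst_tm m k r t) -> tm_ty m r -> tm_ty n t.
Proof.
  revert n; induction t; intros n' Ht Hr; cbn [subst_tm tm_ty] in *; try intuition eauto.
  destruct (Nat.eqb_spec n m); subst; [|exact Ht].
  destruct (i =? k); [eapply tm_ty_unique; eauto|].
  destruct (k <? i); exact Ht.
Qed.

Lemma tm_ty_S_Var k t : tm_ty (S k) t -> exists i, t = Var (S k) i.
Proof. destruct t; cbn; intros H; try lia; try (destruct H; lia). subst; eauto. Qed.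

Lemma subst_tm_other_type n m k r t : tm_ty n t -> m <> n -> subst_tm m k r t = t.
Proof.
  revert n; induction t; intros n' Ht Hmn; cbn in *; subst; try tauto.
  - destruct (Nat.eqb_spec n' m); congruence.
  - destruct Ht; subst; rewrite (IHt 0); auto.
  - destruct Ht as (-> & ? & ?); rewrite (IHt1 0), (IHt2 0); auto.
  - destruct Ht as (-> & ? & ?); rewrite (IHt1 0), (IHt2 0); auto.
Qed.

Lemma lift_tm_lift_tm_same m j k t :
  k <= j -> lift_tm m (S j) (lift_tm m k t) = lift_tm m k (lift_tm m j t).
Proof. intros; induction t; simpl; try congruence. var_crush. Qed.

Lemma lift_tm_lift_tm_diff m m' j k t :
  m <> m' -> lift_tm m j (lift_tm m' k t) = lift_tm m' k (lift_tm m j t).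
Proof. intros; induction t; simpl; try congruence. var_crush. Qed.

Lemma lift_tm_lift_tm0 m k j t :
  lift_tm m (if Nat.eqb k m then S j else j) (lift_tm k 0 t) = lift_tm k 0 (lift_tm m j t).
Proof.
  destruct (Nat.eqb_spec k m) as [->|].
  - apply lift_tm_lift_tm_same; lia.
  - apply lift_tm_lift_tm_diff; auto.
Qed.

Lemma subst_tm_lift_tm_same m j k r t : k <= j ->
  subst_tm m (S j) (lift_tm m k r) (lift_tm m k t) = lift_tm m k (subst_tm m j r t).
Proof. intros; induction t; simpl; try congruence. var_crush; f_equal; lia. Qed.

Lemma subst_tm_lift_tm_diff m j k r t : k <> m ->
  subst_tm m j (lift_tm k 0 r) (lift_tm k 0 t) = lift_tm k 0 (subst_tm m j r t).
Proof. intros; induction t; simpl; try congruence. var_crush. Qed.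

Lemma subst_tm_lift_tm0 m k j r t :
  subst_tm m (if Nat.eqb k m then S j else j) (lift_tm k 0 r) (lift_tm k 0 t)
  = lift_tm k 0 (subst_tm m j r t).
Proof.
  destruct (Nat.eqb_spec k m) as [->|].
  - apply subst_tm_lift_tm_same; lia.
  - apply subst_tm_lift_tm_diff; auto.
Qed.

Lemma subst_tm_lift_tm m k r t : subst_tm m k r (lift_tm m k t) = t.
Proof. induction t; simpl; try congruence. var_crush. Qed.

Lemma subst_Var_lift_tm m k t : subst_tm m k (Var m k) (lift_tm m (S k) t) = t.
Proof. induction t; var_crush; f_equal; lia. Qed.

Lemma subst_Var_lift_tm2 m k t :
  subst_tm m k (Var m (S k)) (lift_tm m (S k) (lift_tm m (S k) t)) = lift_tm m k t.
Proof. induction t; var_crush; f_equal; lia. Qed.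

Ltac binder_case IH :=
  match goal with |- context [Nat.eqb ?n ?m] =>
    destruct (Nat.eqb_spec n m); subst;
    [ rewrite ?Nat.eqb_refl; cbn [lift_tm andb Nat.leb];
      rewrite ?Nat.eqb_refl; cbn [andb Nat.leb]; rewrite ?IH; reflexivity
    | cbn [lift_tm andb Nat.leb];
      rewrite ?(proj2 (Nat.eqb_neq m n)) by auto; cbn [andb]; rewrite ?IH; reflexivity ]
  end.

Lemma subst_Var_lift m k p : subst m k (Var m k) (lift m (S k) p) = p.
Proof.
  revert m k; induction p; intros; cbn [subst lift];
    rewrite ?subst_Var_lift_tm, ?IHp, ?IHp1, ?IHp2; try reflexivity.
  all: binder_case IHp.
Qed.

Lemma subst_Var_lift2 m k p :
  subst m k (Var m (S k)) (lift m (S k) (lift m (S k) p)) = lift m k p.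
Proof.
  revert m k; induction p; intros; cbn [subst lift];
    rewrite ?subst_Var_lift_tm2, ?IHp, ?IHp1, ?IHp2; try reflexivity.
  all: binder_case IHp.
Qed.

(** * The translation commutes with lifting and substitution *)

Lemma approx_lift n m j a b :
  lift m j (approx n a b) = approx n (lift_tm m j a) (lift_tm m j b).
Proof.
  revert m j a b; induction n; intros; [reflexivity|].
  cbn [approx lift]. rewrite !IHn, !lift_tm_lift_tm0.
  destruct (Nat.eqb_spec n m); subst; cbn [lift_tm];
    repeat rewrite ?Nat.eqb_refl, ?andb_false_r; cbn [andb Nat.leb]; try reflexivity.
  all: destruct (Nat.eqb_spec n m); try congruence; reflexivity.
Qed.

Lemma approx_subst n m j r a b :
  subst m j r (approx n a b) = approx n (subst_tm m j r a) (subst_tm m j r b).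
Proof.
  revert m j r a b; induction n; intros; [reflexivity|].
  cbn [approx subst]. rewrite !IHn, !subst_tm_lift_tm0.
  destruct (Nat.eqb_spec n m); subst; cbn [subst_tm];
    repeat rewrite ?Nat.eqb_refl; cbn [andb Nat.leb Nat.eqb Nat.ltb]; try reflexivity.
  all: destruct (Nat.eqb_spec n m); try congruence; reflexivity.
Qed.

Lemma trans_lift m j p : trans (lift m j p) = lift m j (trans p).
Proof.
  revert m j; induction p; intros; cbn [trans lift];
    rewrite ?IHp, ?IHp1, ?IHp2, ?approx_lift; try reflexivity.
  rewrite !lift_tm_lift_tm0.
  destruct (Nat.eqb_spec n m); subst; cbn [lift_tm];
    repeat rewrite ?Nat.eqb_refl, ?andb_false_r; cbn [andb Nat.leb]; try reflexivity.
  destruct (Nat.eqb_spec n m); try congruence; reflexivity.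
Qed.

Lemma trans_subst m j r p : trans (subst m j r p) = subst m j r (trans p).
Proof.
  revert m j r; induction p; intros; cbn [trans subst];
    rewrite ?IHp, ?IHp1, ?IHp2, ?approx_subst; try reflexivity.
  rewrite !subst_tm_lift_tm0.
  destruct (Nat.eqb_spec n m); subst; cbn [subst_tm];
    repeat rewrite ?Nat.eqb_refl; cbn [andb Nat.leb Nat.eqb Nat.ltb]; try reflexivity.
  destruct (Nat.eqb_spec n m); try congruence; reflexivity.
Qed.

Lemma trans_Mem_Var n i j : trans (Mem n (Var n i) (Var (S n) j)) =
  Ex n (And (Mem n (Var n 0) (Var (S n) j)) (approx n (Var n 0) (Var n (S i)))).
Proof. cbn [trans lift_tm]; rewrite Nat.eqb_refl, eqb_Sn_n; reflexivity. Qed.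

Lemma trans_iter_All k m q : trans (Nat.iter k (All m) q) = Nat.iter k (All m) (trans q).
Proof. induction k; [reflexivity|]. rewrite !Nat.iter_succ; cbn [trans]. now rewrite IHk. Qed.

Lemma wf_lift s m k p : wf s (lift m k p) <-> wf s p.
Proof.
  revert m k; induction p; intros; cbn [wf lift];
    rewrite ?tm_ty_lift, ?IHp, ?IHp1, ?IHp2; tauto.
Qed.

Lemma wf_subst s m k r p : tm_ty m r -> wf s p -> wf s (subst m k r p).
Proof.
  revert m k r; induction p; intros m k r Hr Hp; cbn [wf subst] in *;
    intuition auto using tm_ty_subst.
  all: apply IHp; auto; apply tm_ty_lift; auto.
Qed.

Lemma wf_subst_inv s m k r p : tm_ty m r -> wf s (subst m k r p) -> wf s p.
Proof.
  revert m k r; induction p; intros m k r Hr Hp; cbn [wf subst] in *;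
    intuition eauto using tm_ty_subst_inv.
  all: eapply IHp; [|eauto]; apply tm_ty_lift; eauto.
Qed.

Lemma wf_approx s n a b : n <= s -> tm_ty n a -> tm_ty n b -> wf s (approx n a b).
Proof.
  revert a b; induction n; intros a b Hn Ha Hb; cbn [approx wf]; [tauto|].
  repeat split; cbn; rewrite ?tm_ty_lift; auto; try lia; apply IHn; cbn; auto; lia.
Qed.

Lemma wf_trans s p : wf s p -> wf s (trans p).
Proof.
  induction p; cbn [wf trans]; intros Hp; intuition auto using wf_approx.
  all: rewrite ?tm_ty_lift; cbn; auto; try lia.
  apply wf_approx; cbn; rewrite ?tm_ty_lift; auto; lia.
Qed.

Lemma occurs_lift_tm0 m k i a :
  occurs_tm m (if Nat.eqb k m then S i else i) (lift_tm k 0 a) -> occurs_tm m i a.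
Proof.
  induction a; cbn [occurs_tm lift_tm]; try tauto.
  all: intros H; repeat match goal with
    | H : context [Nat.eqb ?a ?b] |- _ => destruct (Nat.eqb_spec a b)
    | H : context [Nat.leb ?a ?b] |- _ => destruct (Nat.leb_spec a b)
    end; subst; cbn [andb occurs_tm] in *; intuition lia.
Qed.

Ltac occurs_Var_absurd :=
  match goal with H : occurs_tm ?m _ (Var ?k _) |- _ =>
    cbn [occurs_tm] in H; destruct (Nat.eqb_spec k m); lia end.

Lemma free_approx n m i a b :
  free m i (approx n a b) -> occurs_tm m i a \/ occurs_tm m i b.
Proof.
  revert m i a b; induction n as [|k IH]; intros m i a b H; [exact H|].
  cbn [approx free] in H.
  destruct H as [[[H|H]|[[H|H]|H]]|[[H|H]|[[H|H]|H]]];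
    try occurs_Var_absurd;
    try (apply IH in H; destruct H; occurs_Var_absurd);
    repeat apply occurs_lift_tm0 in H; auto.
Qed.

Lemma free_trans m i p : free m i (trans p) -> free m i p.
Proof.
  revert m i; induction p; intros m i H; cbn [trans free] in *;
    try (destruct H as [H|H]; [left|right]; eauto; fail); auto.
  - apply free_approx in H; exact H.
  - destruct H as [[H|H]|H]; [occurs_Var_absurd|right; eapply occurs_lift_tm0; eauto|].
    apply free_approx in H; destruct H as [H|H]; [occurs_Var_absurd|].
    left; eapply occurs_lift_tm0; eauto.
Qed.

(* [ctx_imp [a_1; ...; a_n] r] is [a_n -> ... -> a_1 -> r]: the head of the
   list is the innermost, most recently introduced, hypothesis. *)
Fixpoint ctx_imp (G : list form) (r : form) : form :=
  match G with [] => r | a :: G => ctx_imp G (Imp a r) end.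

Lemma Prov_wf e s p : Prov e s p -> wf s p.
Proof. induction 1; cbn in *; intuition. Qed.

Lemma wf_ctx_imp s G r : wf s (ctx_imp G r) <-> Forall (wf s) G /\ wf s r.
Proof.
  revert r; induction G; intros r; cbn.
  - intuition.
  - rewrite IHG, Forall_cons_iff; cbn; tauto.
Qed.

Section Deduction.

Variables (e : bool) (s : nat).
Local Notation Pv := (Prov e s).

Lemma Prov_wf_hyps G r : Pv (ctx_imp G r) -> Forall (wf s) G.
Proof. intros H; apply Prov_wf, wf_ctx_imp in H; tauto. Qed.

Lemma Prov_wf_concl G r : Pv (ctx_imp G r) -> wf s r.
Proof. intros H; apply Prov_wf, wf_ctx_imp in H; tauto. Qed.

Lemma imp_const p q : Pv p -> wf s q -> Pv (Imp q p).
Proof.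
  intros Hp Hq; eapply P_mp; [exact Hp|].
  apply P_log; [constructor|cbn; pose proof (Prov_wf _ _ _ Hp); tauto].
Qed.

Lemma imp_refl p : wf s p -> Pv (Imp p p).
Proof.
  intros Hp.
  eapply P_mp; [apply P_log; [apply (LA1 p p)|cbn; tauto]|].
  eapply P_mp; [apply P_log; [apply (LA1 p (Imp p p))|cbn; tauto]|].
  apply P_log; [apply (LA2 p (Imp p p) p)|cbn; tauto].
Qed.

Lemma imp_trans p q r : Pv (Imp p q) -> Pv (Imp q r) -> Pv (Imp p r).
Proof.
  intros H1 H2; pose proof (Prov_wf _ _ _ H1); pose proof (Prov_wf _ _ _ H2); cbn in *.
  eapply P_mp; [exact H1|]. apply (P_mp _ _ (Imp p (Imp q r))).
  - apply imp_const; [exact H2|tauto].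
  - apply P_log; [apply LA2|cbn; tauto].
Qed.

Lemma ctx_map G X Y : Pv (Imp X Y) -> Pv (ctx_imp G X) -> Pv (ctx_imp G Y).
Proof.
  revert X Y; induction G as [|a G IH]; intros X Y HXY HX; cbn in *.
  - eapply P_mp; eauto.
  - eapply IH; [|exact HX].
    pose proof (Prov_wf_concl _ _ HX); pose proof (Prov_wf _ _ _ HXY); cbn in *.
    apply (P_mp _ _ (Imp a (Imp X Y))); [apply imp_const; [exact HXY|tauto]|].
    apply P_log; [apply LA2|cbn; tauto].
Qed.

Lemma ctx_map2 G X Y Z :
  Pv (Imp X (Imp Y Z)) -> Pv (ctx_imp G X) -> Pv (ctx_imp G Y) -> Pv (ctx_imp G Z).
Proof.
  revert X Y Z; induction G as [|a G IH]; intros X Y Z HXYZ HX HY; cbn in *.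
  - eapply P_mp; [exact HY|]; eapply P_mp; [exact HX|exact HXYZ].
  - pose proof (Prov_wf_concl _ _ HX); pose proof (Prov_wf_concl _ _ HY).
    pose proof (Prov_wf _ _ _ HXYZ); cbn in *.
    eapply IH; [|exact HX|exact HY]. eapply imp_trans.
    + apply (P_mp _ _ (Imp a (Imp X (Imp Y Z)))); [apply imp_const; [exact HXYZ|tauto]|].
      apply P_log; [apply LA2|cbn; tauto].
    + apply P_log; [apply LA2|cbn; tauto].
Qed.

Lemma ctx_const G p : Pv p -> Forall (wf s) G -> Pv (ctx_imp G p).
Proof.
  revert p; induction G as [|a G IH]; intros p Hp HG; cbn; auto.
  inversion HG; subst; apply IH; auto; apply imp_const; auto.
Qed.

Lemma ctx_mp G X Y : Pv (ctx_imp G (Imp X Y)) -> Pv (ctx_imp G X) -> Pv (ctx_imp G Y).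
Proof.
  intros HXY HX; eapply ctx_map2; [|exact HXY|exact HX].
  apply imp_refl, (Prov_wf_concl _ _ HXY).
Qed.

Lemma ctx_impI G a r : Pv (ctx_imp (a :: G) r) -> Pv (ctx_imp G (Imp a r)).
Proof. auto. Qed.

Lemma ctx_weaken G p a : Pv (ctx_imp G p) -> wf s a -> Pv (ctx_imp (a :: G) p).
Proof.
  intros H Ha; cbn; eapply ctx_map; [|exact H].
  apply P_log; [apply LA1|cbn; pose proof (Prov_wf_concl _ _ H); tauto].
Qed.

Lemma ctx_hyp G p : In p G -> Forall (wf s) G -> Pv (ctx_imp G p).
Proof.
  induction G as [|a G IH]; intros Hin HG; [destruct Hin|].
  inversion HG; subst. destruct Hin as [<-|Hin].
  - cbn; apply ctx_const; auto; apply imp_refl; auto.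
  - apply ctx_weaken; auto.
Qed.

Lemma ctx_hyp_nth G i : i < length G -> Forall (wf s) G -> Pv (ctx_imp G (nth i G Bot)).
Proof. intros; apply ctx_hyp; auto; apply nth_In; auto. Qed.

Ltac ctx_log ax :=
  apply P_log; [apply ax|cbn in *; tauto].

Lemma ctx_andI G X Y : Pv (ctx_imp G X) -> Pv (ctx_imp G Y) -> Pv (ctx_imp G (And X Y)).
Proof.
  intros HX HY; eapply ctx_map2; [|exact HX|exact HY].
  pose proof (Prov_wf_concl _ _ HX); pose proof (Prov_wf_concl _ _ HY); ctx_log LA5.
Qed.

Lemma ctx_andE1 G X Y : Pv (ctx_imp G (And X Y)) -> Pv (ctx_imp G X).
Proof. intros H; eapply ctx_map; [|exact H]. pose proof (Prov_wf_concl _ _ H); ctx_log LA3. Qed.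

Lemma ctx_andE2 G X Y : Pv (ctx_imp G (And X Y)) -> Pv (ctx_imp G Y).
Proof. intros H; eapply ctx_map; [|exact H]. pose proof (Prov_wf_concl _ _ H); ctx_log LA4. Qed.

Lemma ctx_orI1 G X Y : Pv (ctx_imp G X) -> wf s Y -> Pv (ctx_imp G (Or X Y)).
Proof. intros H HY; eapply ctx_map; [|exact H]. pose proof (Prov_wf_concl _ _ H); ctx_log LA6. Qed.

Lemma ctx_orI2 G X Y : Pv (ctx_imp G Y) -> wf s X -> Pv (ctx_imp G (Or X Y)).
Proof. intros H HX; eapply ctx_map; [|exact H]. pose proof (Prov_wf_concl _ _ H); ctx_log LA7. Qed.

Lemma ctx_orE G X Y Z : Pv (ctx_imp G (Or X Y)) ->
  Pv (ctx_imp G (Imp X Z)) -> Pv (ctx_imp G (Imp Y Z)) -> Pv (ctx_imp G Z).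
Proof.
  intros HXY HX HY; eapply ctx_mp; [|exact HXY]. eapply ctx_map2; [|exact HX|exact HY].
  pose proof (Prov_wf_concl _ _ HX); pose proof (Prov_wf_concl _ _ HY); ctx_log LA8.
Qed.

(* The hypotheses are lifted past the new binder; [LQ2] and [LQ3] then let
   each of them be moved back outside it. *)
Lemma ctx_allI n G G' p : n <= s -> Forall (wf s) G -> map (lift n 0) G = G' ->
  Pv (ctx_imp G' p) -> Pv (ctx_imp G (All n p)).
Proof.
  intros Hn HG <-; revert p; induction G as [|a G IH]; intros p H; cbn in *.
  - apply P_gen; auto.
  - inversion HG; subst.
    assert (Ha : wf s (lift n 0 a)) by (apply wf_lift; auto).
    pose proof (Prov_wf_concl _ _ H) as Hw; cbn in Hw.
    eapply ctx_map; [|apply IH; eauto].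
    set (X := All n (Imp (lift n 0 a) p)).
    change (Pv (ctx_imp [a; X] (All n p))).
    assert (HG2 : Forall (wf s) [a; X]) by (repeat constructor; cbn; tauto).
    eapply ctx_mp; [eapply ctx_mp|].
    + apply ctx_const; [ctx_log (LQ3 n (lift n 0 a) p)|auto].
    + apply ctx_hyp; [cbn; auto|auto].
    + eapply ctx_mp; [apply ctx_const; [ctx_log LQ2|auto]|].
      apply ctx_hyp; [cbn; auto|auto].
Qed.

Lemma ctx_allE G n p t q : Pv (ctx_imp G (All n p)) -> tm_ty n t ->
  subst n 0 t p = q -> Pv (ctx_imp G q).
Proof.
  intros H Ht <-; eapply ctx_map; [|exact H].
  pose proof (Prov_wf_concl _ _ H); cbn in *.
  apply P_log; [apply LQ1; auto|cbn; split; [tauto|apply wf_subst; tauto]].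
Qed.

Lemma ctx_exI G n p t q : tm_ty n t -> n <= s -> wf s p -> subst n 0 t p = q ->
  Pv (ctx_imp G q) -> Pv (ctx_imp G (Ex n p)).
Proof.
  intros Ht Hn Hp <- H; eapply ctx_map; [|exact H].
  pose proof (Prov_wf_concl _ _ H); apply P_log; [apply LQ4; auto|cbn; tauto].
Qed.

Lemma ctx_exE G n p q G' q' : n <= s -> Pv (ctx_imp G (Ex n p)) ->
  map (lift n 0) G = G' -> lift n 0 q = q' ->
  Pv (ctx_imp (p :: G') q') -> Pv (ctx_imp G q).
Proof.
  intros Hn Hex HG' <- H. pose proof (Prov_wf_hyps _ _ Hex) as HG.
  cbn in H; eapply ctx_allI in H; eauto. eapply ctx_map2; [|exact H|exact Hex].
  pose proof (Prov_wf_concl _ _ Hex); pose proof (Prov_wf_concl _ _ H); cbn in *.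
  apply P_log; [apply LQ5|cbn; split; [tauto|split; [tauto|apply (wf_lift s n 0 q); tauto]]].
Qed.

End Deduction.

Ltac solve_wf := repeat (cbn [wf tm_ty trans Iff] in *; match goal with
  | |- _ /\ _ => split
  | |- wf _ (approx _ _ _) => apply wf_approx
  | |- wf _ (lift _ _ _) => apply wf_lift
  | |- wf _ (trans _) => apply wf_trans
  | |- tm_ty _ (lift_tm _ _ _) => apply tm_ty_lift
  | |- True => exact I
  | |- _ => first [reflexivity | assumption | lia | tauto]
  end).

Ltac solve_wf_ctx := repeat constructor; solve_wf.

Ltac ctx_nth i := match goal with |- Prov ?e ?s (ctx_imp ?G _) =>
  let H := fresh in
  pose proof (ctx_hyp_nth e s G i) as H; cbn [nth] in H;
  apply H; [cbn; lia|first [assumption|solve_wf_ctx]] end.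

Ltac simpl_syntax :=
  repeat (cbn [subst lift map trans subst_tm lift_tm andb Nat.leb Nat.ltb Nat.pred];
          rewrite ?approx_subst, ?approx_lift, ?Nat.eqb_refl, ?eqb_Sn_n, ?eqb_n_Sn,
            ?andb_false_r, ?andb_true_r).

Section DerivedRules.

Variables (e : bool) (s : nat).
Local Notation Pv := (Prov e s).

Lemma imp_All_lift m A B : m <= s -> Pv (Imp (lift m 0 A) B) -> Pv (Imp A (All m B)).
Proof.
  intros Hm H; pose proof (Prov_wf _ _ _ H) as [HA HB]; apply wf_lift in HA.
  change (Pv (ctx_imp [A] (All m B))).
  eapply ctx_allI with (G' := [lift m 0 A]); [auto|solve_wf_ctx|reflexivity|].
  eapply ctx_mp; [apply ctx_const; [exact H|solve_wf_ctx]|]. ctx_nth 0.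
Qed.

Lemma All_And_1 n P Q : n <= s -> wf s P -> wf s Q -> Pv (Imp (All n (And P Q)) (All n P)).
Proof.
  intros; apply (P_mp _ _ (All n (Imp (And P Q) P))).
  - apply P_gen; [auto|apply P_log; [apply LA3|cbn; tauto]].
  - apply P_log; [apply LQ3|cbn; tauto].
Qed.

Lemma All_And_2 n P Q : n <= s -> wf s P -> wf s Q -> Pv (Imp (All n (And P Q)) (All n Q)).
Proof.
  intros; apply (P_mp _ _ (All n (Imp (And P Q) Q))).
  - apply P_gen; [auto|apply P_log; [apply LA4|cbn; tauto]].
  - apply P_log; [apply LQ3|cbn; tauto].
Qed.

Lemma Ex_mono m X Y : m <= s -> wf s X -> wf s Y ->
  Pv (Imp (All m (Imp X Y)) (Imp (Ex m X) (Ex m Y))).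
Proof.
  intros Hm HX HY; change (Pv (ctx_imp [Ex m X; All m (Imp X Y)] (Ex m Y))).
  eapply ctx_exE with (n := m) (G' := [Ex m (lift m 1 X); All m (lift m 1 (Imp X Y))])
    (q' := Ex m (lift m 1 Y)); [lia|ctx_nth 0|cbn; rewrite Nat.eqb_refl; reflexivity
                                 |cbn; rewrite Nat.eqb_refl; reflexivity|].
  eapply ctx_exI with (t := Var m 0); [reflexivity|lia|apply wf_lift; auto|apply subst_Var_lift|].
  eapply ctx_mp; [eapply ctx_allE with (t := Var m 0); [ctx_nth 2|reflexivity|apply subst_Var_lift]|].
  ctx_nth 0.
Qed.

Lemma And_cong A P P' Q Q' : Pv (Imp A (Imp P P')) -> Pv (Imp A (Imp Q Q')) ->
  Pv (Imp A (Imp (And P Q) (And P' Q'))).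
Proof.
  intros HP HQ; pose proof (Prov_wf _ _ _ HP); pose proof (Prov_wf _ _ _ HQ); cbn in *.
  change (Pv (ctx_imp [And P Q; A] (And P' Q'))).
  apply ctx_andI.
  - eapply ctx_mp; [eapply ctx_mp; [apply ctx_const; [exact HP|solve_wf_ctx]|ctx_nth 1]|].
    eapply ctx_andE1; ctx_nth 0.
  - eapply ctx_mp; [eapply ctx_mp; [apply ctx_const; [exact HQ|solve_wf_ctx]|ctx_nth 1]|].
    eapply ctx_andE2; ctx_nth 0.
Qed.

Lemma Or_cong A P P' Q Q' : Pv (Imp A (Imp P P')) -> Pv (Imp A (Imp Q Q')) ->
  Pv (Imp A (Imp (Or P Q) (Or P' Q'))).
Proof.
  intros HP HQ; pose proof (Prov_wf _ _ _ HP); pose proof (Prov_wf _ _ _ HQ); cbn in *.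
  change (Pv (ctx_imp [Or P Q; A] (Or P' Q'))).
  eapply ctx_orE; [ctx_nth 0| |]; apply ctx_impI.
  - apply ctx_orI1; [|tauto].
    eapply ctx_mp; [eapply ctx_mp; [apply ctx_const; [exact HP|solve_wf_ctx]|ctx_nth 2]|ctx_nth 0].
  - apply ctx_orI2; [|tauto].
    eapply ctx_mp; [eapply ctx_mp; [apply ctx_const; [exact HQ|solve_wf_ctx]|ctx_nth 2]|ctx_nth 0].
Qed.

Lemma Imp_cong A P P' Q Q' : Pv (Imp A (Imp P' P)) -> Pv (Imp A (Imp Q Q')) ->
  Pv (Imp A (Imp (Imp P Q) (Imp P' Q'))).
Proof.
  intros HP HQ; pose proof (Prov_wf _ _ _ HP); pose proof (Prov_wf _ _ _ HQ); cbn in *.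
  change (Pv (ctx_imp [P'; Imp P Q; A] Q')).
  eapply ctx_mp; [eapply ctx_mp; [apply ctx_const; [exact HQ|solve_wf_ctx]|ctx_nth 2]|].
  eapply ctx_mp; [ctx_nth 1|].
  eapply ctx_mp; [eapply ctx_mp; [apply ctx_const; [exact HP|solve_wf_ctx]|ctx_nth 2]|ctx_nth 0].
Qed.

Lemma All_cong m A P Q : m <= s -> Pv (Imp (lift m 0 A) (Imp P Q)) ->
  Pv (Imp A (Imp (All m P) (All m Q))).
Proof.
  intros Hm H; pose proof (Prov_wf _ _ _ H) as W; cbn [wf] in W.
  eapply imp_trans; [apply imp_All_lift; [exact Hm|exact H]|].
  apply P_log; [apply LQ3|cbn; tauto].
Qed.

Lemma Ex_cong m A P Q : m <= s -> Pv (Imp (lift m 0 A) (Imp P Q)) ->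
  Pv (Imp A (Imp (Ex m P) (Ex m Q))).
Proof.
  intros Hm H; pose proof (Prov_wf _ _ _ H) as W; cbn [wf] in W.
  eapply imp_trans; [apply imp_All_lift; [exact Hm|exact H]|].
  apply Ex_mono; tauto.
Qed.

End DerivedRules.

(** * The relation [approx] is an equivalence *)

(* Every element of [t] is [approx]-equal to some element of [u];
   [approx (S k) t u] is this condition in both directions. *)
Definition covers k t u : form :=
  All k (Imp (Mem k (Var k 0) (lift_tm k 0 t))
             (Ex k (And (Mem k (Var k 0) (lift_tm k 0 (lift_tm k 0 u)))
                        (approx k (Var k 1) (Var k 0))))).

Lemma approx_S_covers k t u : approx (S k) t u = And (covers k t u) (covers k u t).
Proof. reflexivity. Qed.

Section Approx.

Variables (e : bool) (s : nat).
Local Notation Pv := (Prov e s).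

Lemma approx_refl n t : n <= s -> tm_ty n t -> Pv (approx n t t).
Proof.
  revert t; induction n as [|k IH]; intros t Hs Ht.
  - apply P_log; [apply LE1; auto|cbn; auto].
  - destruct (tm_ty_S_Var _ _ Ht) as [i ->].
    assert (Hcov : Pv (covers k (Var (S k) i) (Var (S k) i))).
    { unfold covers; simpl_syntax.
      eapply (ctx_allI _ _ _ []); [lia|constructor|reflexivity|]. apply ctx_impI.
      eapply ctx_exI with (t := Var k 0); [reflexivity|lia|solve_wf|simpl_syntax; reflexivity|].
      apply ctx_andI; [ctx_nth 0|].
      apply ctx_const; [apply IH; [lia|reflexivity]|solve_wf_ctx]. }
    rewrite approx_S_covers; apply (ctx_andI _ _ []); exact Hcov.
Qed.

Lemma Eq_subst_inst n t u p X Y : tm_ty n t -> tm_ty n u ->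
  subst n 0 t p = X -> subst n 0 u p = Y -> wf s (Imp (Eq n t u) (Imp X Y)) ->
  Pv (Imp (Eq n t u) (Imp X Y)).
Proof. intros ? ? <- <- ?; apply P_log; [apply LE2|]; auto. Qed.

Lemma approx_sym n t u : n <= s -> tm_ty n t -> tm_ty n u ->
  Pv (Imp (approx n t u) (approx n u t)).
Proof.
  intros Hs Ht Hu; destruct n as [|k].
  - change (Pv (ctx_imp [Eq 0 t u] (Eq 0 u t))).
    eapply ctx_mp; [eapply ctx_mp|].
    + apply ctx_const; [|solve_wf_ctx].
      apply (Eq_subst_inst 0 t u (Eq 0 (Var 0 0) (lift_tm 0 0 t)) (Eq 0 t t)); auto;
        [cbn [subst subst_tm]; rewrite !subst_tm_lift_tm; reflexivity..|solve_wf].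
    + ctx_nth 0.
    + apply ctx_const; [apply (approx_refl 0); auto|solve_wf_ctx].
  - change (Pv (ctx_imp [approx (S k) t u] (approx (S k) u t))).
    rewrite !approx_S_covers; apply ctx_andI; [eapply ctx_andE2|eapply ctx_andE1];
      rewrite <- approx_S_covers; ctx_nth 0.
Qed.

Lemma Eq0_trans t u v : tm_ty 0 t -> tm_ty 0 u -> tm_ty 0 v ->
  Pv (Imp (Eq 0 t u) (Imp (Eq 0 u v) (Eq 0 t v))).
Proof.
  intros Ht Hu Hv; change (Pv (ctx_imp [Eq 0 u v; Eq 0 t u] (Eq 0 t v))).
  eapply ctx_mp; [eapply ctx_mp|].
  - apply ctx_const; [|solve_wf_ctx].
    apply (Eq_subst_inst 0 u v (Eq 0 (lift_tm 0 0 t) (Var 0 0)) (Eq 0 t u)); auto;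
      [cbn [subst subst_tm]; rewrite !subst_tm_lift_tm; reflexivity..|solve_wf].
  - ctx_nth 0.
  - ctx_nth 1.
Qed.

Lemma covers_trans k a b c :
  (forall t u v, tm_ty k t -> tm_ty k u -> tm_ty k v ->
     Pv (Imp (approx k t u) (Imp (approx k u v) (approx k t v)))) ->
  S k <= s ->
  Pv (Imp (covers k (Var (S k) a) (Var (S k) b))
          (Imp (covers k (Var (S k) b) (Var (S k) c)) (covers k (Var (S k) a) (Var (S k) c)))).
Proof.
  intros IH Hs; unfold covers; simpl_syntax.
  set (A := Var (S k) a); set (B := Var (S k) b); set (C := Var (S k) c).
  set (Hab := All k (Imp (Mem k (Var k 0) A)
                (Ex k (And (Mem k (Var k 0) B) (approx k (Var k 1) (Var k 0)))))).
  set (Hbc := All k (Imp (Mem k (Var k 0) B)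
                (Ex k (And (Mem k (Var k 0) C) (approx k (Var k 1) (Var k 0)))))).
  change (Pv (ctx_imp [Hbc; Hab] (All k (Imp (Mem k (Var k 0) A)
            (Ex k (And (Mem k (Var k 0) C) (approx k (Var k 1) (Var k 0)))))))).
  eapply ctx_allI with (G' := [Hbc; Hab]);
    [lia|solve_wf_ctx|subst A B C Hab Hbc; simpl_syntax; reflexivity|].
  apply ctx_impI.
  (* x in A; pick y in B with x ~ y, then z in C with y ~ z *)
  eapply ctx_exE with (n := k) (G' := [Mem k (Var k 1) A; Hbc; Hab])
    (q' := Ex k (And (Mem k (Var k 0) C) (approx k (Var k 2) (Var k 0))));
    [lia| |subst A B C Hab Hbc; simpl_syntax; reflexivity..|].
  { eapply ctx_mp; [eapply ctx_allE with (t := Var k 0); [ctx_nth 2|reflexivity|]|ctx_nth 0].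
    subst A B C Hab Hbc; simpl_syntax; reflexivity. }
  eapply ctx_exE with (n := k)
    (G' := [And (Mem k (Var k 1) B) (approx k (Var k 2) (Var k 1)); Mem k (Var k 2) A; Hbc; Hab])
    (q' := Ex k (And (Mem k (Var k 0) C) (approx k (Var k 3) (Var k 0))));
    [lia| |subst A B C Hab Hbc; simpl_syntax; reflexivity..|].
  { eapply ctx_mp; [eapply ctx_allE with (t := Var k 0); [ctx_nth 2|reflexivity|]|].
    - subst A B C Hab Hbc; simpl_syntax; reflexivity.
    - eapply ctx_andE1; ctx_nth 0. }
  eapply ctx_exI with (t := Var k 0);
    [reflexivity|lia|solve_wf|subst A B C Hab Hbc; simpl_syntax; reflexivity|].
  apply ctx_andI; [eapply ctx_andE1; ctx_nth 0|].
  eapply ctx_mp; [eapply ctx_mp|].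
  - apply ctx_const; [apply (IH (Var k 2) (Var k 1) (Var k 0)); reflexivity|solve_wf_ctx].
  - eapply ctx_andE2; ctx_nth 1.
  - eapply ctx_andE2; ctx_nth 0.
Qed.

Lemma approx_trans n t u v : n <= s -> tm_ty n t -> tm_ty n u -> tm_ty n v ->
  Pv (Imp (approx n t u) (Imp (approx n u v) (approx n t v))).
Proof.
  revert t u v; induction n as [|k IH]; intros t u v Hs Ht Hu Hv; [apply Eq0_trans; auto|].
  destruct (tm_ty_S_Var _ _ Ht) as [a ->], (tm_ty_S_Var _ _ Hu) as [b ->],
    (tm_ty_S_Var _ _ Hv) as [c ->].
  assert (IH' : forall t u v, tm_ty k t -> tm_ty k u -> tm_ty k v ->
            Pv (Imp (approx k t u) (Imp (approx k u v) (approx k t v))))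
    by (intros; apply IH; auto; lia).
  assert (Hw : forall x y, wf s (covers k (Var (S k) x) (Var (S k) y)))
    by (intros; unfold covers; solve_wf).
  rewrite !approx_S_covers.
  change (Pv (ctx_imp
    [And (covers k (Var (S k) b) (Var (S k) c)) (covers k (Var (S k) c) (Var (S k) b));
     And (covers k (Var (S k) a) (Var (S k) b)) (covers k (Var (S k) b) (Var (S k) a))]
    (And (covers k (Var (S k) a) (Var (S k) c)) (covers k (Var (S k) c) (Var (S k) a))))).
  assert (HG : Forall (wf s)
    [And (covers k (Var (S k) b) (Var (S k) c)) (covers k (Var (S k) c) (Var (S k) b));
     And (covers k (Var (S k) a) (Var (S k) b)) (covers k (Var (S k) b) (Var (S k) a))])
    by (repeat apply Forall_cons; try apply Forall_nil; split; apply Hw).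
  apply ctx_andI; (eapply ctx_mp; [eapply ctx_mp|]).
  - apply ctx_const; [apply (covers_trans k a b c); auto|exact HG].
  - eapply ctx_andE1; ctx_nth 1.
  - eapply ctx_andE1; ctx_nth 0.
  - apply ctx_const; [apply (covers_trans k c b a); auto|exact HG].
  - eapply ctx_andE2; ctx_nth 0.
  - eapply ctx_andE2; ctx_nth 1.
Qed.

Lemma approx_rewrite_l n t u c : n <= s -> tm_ty n t -> tm_ty n u -> tm_ty n c ->
  Pv (Imp (approx n t u) (Imp (approx n t c) (approx n u c))).
Proof.
  intros; change (Pv (ctx_imp [approx n t c; approx n t u] (approx n u c))).
  eapply ctx_mp; [eapply ctx_mp|].
  - apply ctx_const; [apply (approx_trans n u t c); auto|solve_wf_ctx].
  - eapply ctx_mp; [apply ctx_const; [apply (approx_sym n t u); auto|solve_wf_ctx]|ctx_nth 1].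
  - ctx_nth 0.
Qed.

Lemma approx_rewrite_r n t u c : n <= s -> tm_ty n t -> tm_ty n u -> tm_ty n c ->
  Pv (Imp (approx n t u) (Imp (approx n c t) (approx n c u))).
Proof.
  intros; change (Pv (ctx_imp [approx n c t; approx n t u] (approx n c u))).
  eapply ctx_mp; [eapply ctx_mp|].
  - apply ctx_const; [apply (approx_trans n c t u); auto|solve_wf_ctx].
  - ctx_nth 0.
  - ctx_nth 1.
Qed.

End Approx.

(** * Translated formulas respect [approx] *)

Lemma subst_tm_Var_cases N k i t u : tm_ty N t -> tm_ty N u ->
  (subst_tm N k t (Var N i) = t /\ subst_tm N k u (Var N i) = u) \/
  (exists c, tm_ty N c /\ subst_tm N k t (Var N i) = c /\ subst_tm N k u (Var N i) = c).
Proof.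
  intros; cbn [subst_tm]; rewrite Nat.eqb_refl.
  destruct (Nat.eqb_spec i k); [left; auto|right].
  destruct (Nat.ltb_spec k i); [exists (Var N (pred i))|exists (Var N i)]; cbn; auto.
Qed.

Section Congruence.

Variables (e : bool) (s : nat).
Local Notation Pv := (Prov e s).

Lemma imp_const_refl A X : wf s A -> wf s X -> Pv (Imp A (Imp X X)).
Proof. intros; apply imp_const; [apply imp_refl|]; auto. Qed.

Lemma trans_Mem_cong_l m a a' b : S m <= s -> tm_ty m a -> tm_ty m a' -> tm_ty (S m) b ->
  Pv (Imp (approx m a a') (Imp (trans (Mem m a b)) (trans (Mem m a' b)))).
Proof.
  intros Hs Ha Ha' Hb; cbn [trans].
  apply Ex_cong; [lia|]. rewrite approx_lift.
  change (Pv (ctx_imp [And (Mem m (Var m 0) (lift_tm m 0 b)) (approx m (Var m 0) (lift_tm m 0 a));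
                       approx m (lift_tm m 0 a) (lift_tm m 0 a')]
            (And (Mem m (Var m 0) (lift_tm m 0 b)) (approx m (Var m 0) (lift_tm m 0 a'))))).
  apply ctx_andI; [eapply ctx_andE1; ctx_nth 0|].
  eapply ctx_mp; [eapply ctx_mp|].
  - apply ctx_const; [|solve_wf_ctx].
    apply (approx_trans _ _ m (Var m 0) (lift_tm m 0 a) (lift_tm m 0 a'));
      [lia|reflexivity|apply tm_ty_lift; auto..].
  - eapply ctx_andE2; ctx_nth 0.
  - ctx_nth 1.
Qed.

Lemma trans_Mem_cong_r m a b b' : S m <= s -> tm_ty m a -> tm_ty (S m) b -> tm_ty (S m) b' ->
  Pv (Imp (approx (S m) b b') (Imp (trans (Mem m a b)) (trans (Mem m a b')))).
Proof.
  intros Hs Ha Hb Hb'.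
  destruct (tm_ty_S_Var _ _ Hb) as [i ->], (tm_ty_S_Var _ _ Hb') as [j ->].
  cbn [trans]; simpl_syntax.
  set (B := Var (S m) i); set (B' := Var (S m) j).
  set (la := lift_tm m 0 a); set (la2 := lift_tm m 0 la); set (la3 := lift_tm m 0 la2).
  assert (T1 : tm_ty m la) by (apply tm_ty_lift; auto).
  assert (T2 : tm_ty m la2) by (apply tm_ty_lift; auto).
  assert (T3 : tm_ty m la3) by (apply tm_ty_lift; auto).
  change (Pv (ctx_imp [Ex m (And (Mem m (Var m 0) B) (approx m (Var m 0) la)); approx (S m) B B']
                      (Ex m (And (Mem m (Var m 0) B') (approx m (Var m 0) la))))).
  (* x in B with x ~ a; pick x' in B' with x ~ x', then x' ~ a *)
  eapply ctx_exE with (n := m)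
    (G' := [Ex m (And (Mem m (Var m 0) B) (approx m (Var m 0) la2)); approx (S m) B B'])
    (q' := Ex m (And (Mem m (Var m 0) B') (approx m (Var m 0) la2)));
    [lia|ctx_nth 0|subst B B' la2 la; simpl_syntax; rewrite ?lift_tm_lift_tm_same by lia;
                   reflexivity..|].
  eapply ctx_exE with (n := m) (p := And (Mem m (Var m 0) B') (approx m (Var m 1) (Var m 0)))
    (G' := [And (Mem m (Var m 1) B) (approx m (Var m 1) la2);
            Ex m (And (Mem m (Var m 0) B) (approx m (Var m 0) la3)); approx (S m) B B'])
    (q' := Ex m (And (Mem m (Var m 0) B') (approx m (Var m 0) la3)));
    [lia| |subst B B' la3 la2 la; simpl_syntax; rewrite ?lift_tm_lift_tm_same by lia;
           reflexivity..|].
  { eapply ctx_mp; [eapply ctx_allE with (t := Var m 0)|eapply ctx_andE1; ctx_nth 0].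
    - rewrite approx_S_covers; eapply ctx_andE1; rewrite <- approx_S_covers; ctx_nth 2.
    - reflexivity.
    - subst B B'; simpl_syntax; reflexivity. }
  eapply ctx_exI with (t := Var m 0);
    [reflexivity|lia|solve_wf|subst B B' la3; simpl_syntax; rewrite subst_tm_lift_tm; reflexivity|].
  apply ctx_andI; [eapply ctx_andE1; ctx_nth 0|].
  eapply ctx_mp; [eapply ctx_mp|].
  - apply ctx_const; [|solve_wf_ctx].
    apply (approx_trans _ _ m (Var m 0) (Var m 1) la2); first [lia|reflexivity|auto].
  - eapply ctx_mp; [apply ctx_const; [|solve_wf_ctx]|].
    { apply (approx_sym _ _ m (Var m 1) (Var m 0)); first [lia|reflexivity]. }
    eapply ctx_andE2; ctx_nth 0.
  - eapply ctx_andE2; ctx_nth 1.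
Qed.


Lemma trans_subst_Eq_cong n n0 k a b t u : 1 <= n -> n <= s -> wf s (Eq n0 a b) ->
  tm_ty n t -> tm_ty n u ->
  Pv (Imp (approx n t u)
          (Imp (trans (subst n k t (Eq n0 a b))) (trans (subst n k u (Eq n0 a b))))).
Proof.
  intros Hn1 Hns (Hm & Ha & Hb) Ht Hu; cbn [subst trans].
  destruct (Nat.eq_dec n0 n) as [->|Hne].
  - destruct n as [|n']; [lia|].
    destruct (tm_ty_S_Var _ _ Ha) as [ia ->], (tm_ty_S_Var _ _ Hb) as [ib ->].
    destruct (subst_tm_Var_cases (S n') k ia t u Ht Hu) as [[E1 E2]|(c & Hc & E1 & E2)],
      (subst_tm_Var_cases (S n') k ib t u Ht Hu) as [[E3 E4]|(d & Hd & E3 & E4)];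
      rewrite E1, E2, E3, E4.
    + apply imp_const; [apply imp_const; [apply approx_refl|]|]; auto; apply wf_approx; auto.
    + apply approx_rewrite_l; auto.
    + apply approx_rewrite_r; auto.
    + apply imp_const_refl; apply wf_approx; auto.
  - rewrite !(subst_tm_other_type n0 n _ _ a), !(subst_tm_other_type n0 n _ _ b) by auto.
    apply imp_const_refl; apply wf_approx; auto.
Qed.

Lemma trans_subst_Mem_cong n n0 k a b t u : 1 <= n -> n <= s -> wf s (Mem n0 a b) ->
  tm_ty n t -> tm_ty n u ->
  Pv (Imp (approx n t u)
          (Imp (trans (subst n k t (Mem n0 a b))) (trans (subst n k u (Mem n0 a b))))).
Proof.
  intros Hn1 Hns Hw Ht Hu; pose proof Hw as (Hm & Ha & Hb); cbn [subst].
  assert (Hconst : forall a' b', wf s (Mem n0 a' b') ->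
            Pv (Imp (approx n t u) (Imp (trans (Mem n0 a' b')) (trans (Mem n0 a' b')))))
    by (intros; apply imp_const_refl; [apply wf_approx|apply wf_trans]; auto).
  destruct (Nat.eq_dec n0 n) as [->|Hne].
  - rewrite !(subst_tm_other_type (S n) n _ _ b) by (auto; lia).
    destruct n as [|n']; [lia|].
    destruct (tm_ty_S_Var _ _ Ha) as [ia ->].
    destruct (subst_tm_Var_cases (S n') k ia t u Ht Hu) as [[E1 E2]|(c & Hc & E1 & E2)];
      rewrite E1, E2.
    + apply trans_Mem_cong_l; auto.
    + apply Hconst; cbn; auto.
  - rewrite !(subst_tm_other_type n0 n _ _ a) by auto.
    destruct (Nat.eq_dec (S n0) n) as [<-|Hne'].
    + destruct (tm_ty_S_Var _ _ Hb) as [ib ->].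
      destruct (subst_tm_Var_cases (S n0) k ib t u Ht Hu) as [[E1 E2]|(c & Hc & E1 & E2)];
        rewrite E1, E2.
      * apply trans_Mem_cong_r; auto.
      * apply Hconst; cbn; auto.
    + rewrite !(subst_tm_other_type (S n0) n _ _ b) by auto. apply Hconst; auto.
Qed.

Lemma trans_subst_cong n p k t u : 1 <= n -> n <= s -> wf s p -> tm_ty n t -> tm_ty n u ->
  Pv (Imp (approx n t u) (Imp (trans (subst n k t p)) (trans (subst n k u p)))).
Proof.
  intros Hn1 Hns; revert k t u.
  induction p as [n0 a b|n0 a b| |p1 IH1 p2 IH2|p1 IH1 p2 IH2|p1 IH1 p2 IH2|m p IH|m p IH];
    intros k t u Hw Ht Hu; cbn [wf] in Hw.
  - apply trans_subst_Eq_cong; auto.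
  - apply trans_subst_Mem_cong; auto.
  - apply imp_const_refl; [apply wf_approx|]; cbn; auto.
  - apply And_cong; [apply IH1|apply IH2]; tauto.
  - apply Or_cong; [apply IH1|apply IH2]; tauto.
  - apply Imp_cong; [|apply IH2; tauto].
    eapply imp_trans; [apply approx_sym; auto|apply IH1; tauto].
  - cbn [subst trans]; apply All_cong; [tauto|].
    rewrite approx_lift; apply IH; rewrite ?tm_ty_lift; tauto.
  - cbn [subst trans]; apply Ex_cong; [tauto|].
    rewrite approx_lift; apply IH; rewrite ?tm_ty_lift; tauto.
Qed.

(* At type 0, [approx] is equality and this is an instance of [LE2]. *)
Lemma trans_cong n p t u : n <= s -> wf s p -> tm_ty n t -> tm_ty n u ->
  Pv (Imp (approx n t u) (Imp (subst n 0 t (trans p)) (subst n 0 u (trans p)))).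
Proof.
  intros Hn Hp Ht Hu; destruct n as [|n'].
  - apply P_log; [apply LE2; auto|].
    cbn; repeat split; auto; try lia; apply wf_subst; auto; apply wf_trans; auto.
  - rewrite <- !trans_subst; apply trans_subst_cong; auto; lia.
Qed.

End Congruence.

(** * Translation of the axioms *)

Section TranslatedAxioms.

Variables (e : bool) (s : nat).
Local Notation Pv := (Prov e s).

Lemma Mem_imp_trans_Mem n a b : S n <= s -> tm_ty n a -> tm_ty (S n) b ->
  Pv (Imp (Mem n a b) (trans (Mem n a b))).
Proof.
  intros Hs Ha Hb; change (Pv (ctx_imp [Mem n a b] (trans (Mem n a b)))); cbn [trans].
  eapply ctx_exI with (t := a); [auto|lia|solve_wf|
    simpl_syntax; rewrite !subst_tm_lift_tm; reflexivity|].
  apply ctx_andI; [ctx_nth 0|apply ctx_const; [apply approx_refl; auto; lia|solve_wf_ctx]].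
Qed.

Lemma covers_of_trans_Mem_imp n i j : S n <= s ->
  Pv (Imp (All n (Imp (trans (Mem n (Var n 0) (Var (S n) i)))
                      (trans (Mem n (Var n 0) (Var (S n) j)))))
          (covers n (Var (S n) i) (Var (S n) j))).
Proof.
  intros Hs; apply imp_All_lift; [lia|].
  set (A := Var (S n) i); set (B := Var (S n) j).
  change (Pv (ctx_imp [Mem n (Var n 0) (lift_tm n 0 A);
                       lift n 0 (All n (Imp (trans (Mem n (Var n 0) A)) (trans (Mem n (Var n 0) B))))]
            (Ex n (And (Mem n (Var n 0) (lift_tm n 0 (lift_tm n 0 B))) (approx n (Var n 1) (Var n 0)))))).
  subst A B; simpl_syntax.
  (* x in A gives x* in A, hence x* in B: some y in B with y ~ x *)
  assert (HB : Pv (ctx_imp [Mem n (Var n 0) (Var (S n) i);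
     All n (Imp (Ex n (And (Mem n (Var n 0) (Var (S n) i)) (approx n (Var n 0) (Var n 1))))
                (Ex n (And (Mem n (Var n 0) (Var (S n) j)) (approx n (Var n 0) (Var n 1)))))]
     (Ex n (And (Mem n (Var n 0) (Var (S n) j)) (approx n (Var n 0) (Var n 1)))))).
  { eapply ctx_mp; [eapply ctx_allE with (t := Var n 0); [ctx_nth 1|reflexivity|simpl_syntax; reflexivity]|].
    eapply ctx_mp; [apply ctx_const; [|solve_wf_ctx]|ctx_nth 0].
    rewrite <- trans_Mem_Var; apply Mem_imp_trans_Mem; auto; reflexivity. }
  eapply ctx_mp; [|exact HB].
  eapply ctx_mp; [apply ctx_const; [apply Ex_mono; [lia|solve_wf|solve_wf]|solve_wf_ctx]|].
  apply ctx_const; [|solve_wf_ctx]. apply P_gen; [lia|].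
  apply (ctx_andI _ _ [_]); [eapply ctx_andE1; ctx_nth 0|].
  eapply ctx_mp; [apply ctx_const; [|solve_wf_ctx]|eapply ctx_andE2; ctx_nth 0].
  apply approx_sym; first [lia|reflexivity].
Qed.

Lemma trans_ext_axiom n : S n <= s ->
  Pv (trans (Imp (All n (Iff (Mem n (Var n 0) (Var (S n) 0)) (Mem n (Var n 0) (Var (S n) 1))))
                 (Eq (S n) (Var (S n) 0) (Var (S n) 1)))).
Proof.
  intros Hs.
  set (Mx := trans (Mem n (Var n 0) (Var (S n) 0))).
  set (My := trans (Mem n (Var n 0) (Var (S n) 1))).
  assert (wf s Mx) by (apply wf_trans; cbn; auto).
  assert (wf s My) by (apply wf_trans; cbn; auto).
  change (Pv (ctx_imp [All n (And (Imp Mx My) (Imp My Mx))]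
    (And (covers n (Var (S n) 0) (Var (S n) 1)) (covers n (Var (S n) 1) (Var (S n) 0))))).
  assert (HG : Forall (wf s) [All n (And (Imp Mx My) (Imp My Mx))]) by solve_wf_ctx.
  apply ctx_andI; (eapply ctx_mp; [apply ctx_const; [apply covers_of_trans_Mem_imp; auto|auto]|]).
  - eapply ctx_mp; [apply ctx_const; [apply (All_And_1 _ _ n (Imp Mx My) (Imp My Mx)); [lia|exact (conj H H0)|exact (conj H0 H)]|auto]|ctx_nth 0].
  - eapply ctx_mp; [apply ctx_const; [apply (All_And_2 _ _ n (Imp Mx My) (Imp My Mx)); [lia|exact (conj H H0)|exact (conj H0 H)]|auto]|ctx_nth 0].
Qed.

Lemma Iff_trans_Mem_of_cong n L : S n <= s -> wf s L ->
  Pv (Imp (approx n (Var n 0) (Var n 1)) (Imp (lift n 1 L) (lift n 0 L))) ->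
  Pv (Imp (All n (Iff (Mem n (Var n 0) (Var (S n) 0)) L))
          (All n (Iff (trans (Mem n (Var n 0) (Var (S n) 0))) L))).
Proof.
  intros Hs HL Hcong; rewrite trans_Mem_Var; unfold Iff.
  set (M := Mem n (Var n 0) (Var (S n) 0)).
  set (TM := Ex n (And M (approx n (Var n 0) (Var n 1)))).
  change (Pv (ctx_imp [All n (And (Imp M L) (Imp L M))] (All n (And (Imp TM L) (Imp L TM))))).
  set (Hyp := All n (And (Imp M (lift n 1 L)) (Imp (lift n 1 L) M))).
  eapply ctx_allI with (G' := [Hyp]); [lia|solve_wf_ctx|subst Hyp M; simpl_syntax; reflexivity|].
  apply ctx_andI; apply ctx_impI.
  - (* a witness w in x with w ~ z satisfies L, hence so does z *)
    eapply ctx_exE with (n := n) (G' := map (lift n 0) [TM; Hyp]) (q' := lift n 0 L);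
      [lia|ctx_nth 0|reflexivity..|].
    eapply ctx_mp; [eapply ctx_mp|].
    + apply ctx_const; [exact Hcong|solve_wf_ctx].
    + eapply ctx_andE2; ctx_nth 0.
    + eapply ctx_mp; [eapply ctx_andE1, ctx_allE with (t := Var n 0)|eapply ctx_andE1; ctx_nth 0].
      * ctx_nth 2.
      * reflexivity.
      * subst Hyp M; simpl_syntax; rewrite subst_Var_lift; reflexivity.
  - (* z itself is the witness *)
    eapply ctx_exI with (t := Var n 0);
      [reflexivity|lia|subst TM M; solve_wf|subst M; simpl_syntax; reflexivity|].
    apply ctx_andI.
    + eapply ctx_mp; [eapply ctx_andE2, ctx_allE with (t := Var n 0)|ctx_nth 0].
      * ctx_nth 1.
      * reflexivity.
      * subst Hyp M; simpl_syntax; rewrite subst_Var_lift; reflexivity.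
    + apply ctx_const; [apply approx_refl; [lia|reflexivity]|solve_wf_ctx].
Qed.

Lemma trans_comp_axiom n p : S n <= s -> wf s p -> (forall m i, free m i p -> m <= S n) ->
  Pv (trans (Ex (S n) (All n (Iff (Mem n (Var n 0) (Var (S n) 0)) (lift (S n) 0 p))))).
Proof.
  intros Hs Hp Hfree.
  set (L := lift (S n) 0 (trans p)).
  assert (HL : wf s L) by (apply wf_lift, wf_trans; auto).
  assert (Hax : Pv (Ex (S n) (All n (Iff (Mem n (Var n 0) (Var (S n) 0)) L)))).
  { apply P_ax; [|unfold L; solve_wf].
    apply TA_comp; [auto|apply wf_trans; auto|intros m i Hf; apply (Hfree m i), free_trans, Hf]. }
  assert (Hcong : Pv (Imp (approx n (Var n 0) (Var n 1)) (Imp (lift n 1 L) (lift n 0 L)))).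
  { pose proof (trans_cong e s n (lift n 1 (lift n 1 (lift (S n) 0 p))) (Var n 0) (Var n 1)) as C.
    rewrite !trans_lift, subst_Var_lift, subst_Var_lift2 in C.
    apply C; [lia|rewrite !wf_lift; auto|reflexivity|reflexivity]. }
  change (Pv (Ex (S n) (All n (Iff (trans (Mem n (Var n 0) (Var (S n) 0)))
                                   (trans (lift (S n) 0 p)))))).
  rewrite trans_lift; fold L.
  eapply P_mp; [exact Hax|].
  eapply P_mp; [apply (P_gen _ _ (S n)); [lia|apply (Iff_trans_Mem_of_cong n L); auto]|].
  apply Ex_mono; [lia|solve_wf..].
Qed.

End TranslatedAxioms.

Lemma trans_logax e s p : logax p -> wf s p -> Prov e s (trans p).
Proof.
  intros Hl Hw; pose proof (wf_trans _ _ Hw) as Hw'.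
  destruct Hl; cbn [trans Neg] in *; try (apply P_log; [constructor|exact Hw']).
  - rewrite trans_subst in *; apply P_log; [constructor; auto|exact Hw'].
  - rewrite trans_lift in *; apply P_log; [constructor|exact Hw'].
  - rewrite trans_subst in *; apply P_log; [constructor; auto|exact Hw'].
  - rewrite trans_lift in *; apply P_log; [constructor|exact Hw'].
  - apply approx_refl; cbn in Hw; tauto.
  - cbn [wf] in Hw; destruct Hw as [[Hn [Ht Hu]] [H1 H2]].
    rewrite !trans_subst; apply trans_cong; auto; eapply wf_subst_inv; eauto.
Qed.

Lemma trans_tiax e s p : tiax true s p -> wf s p -> Prov e s (trans p).
Proof.
  intros Ha Hw; pose proof (wf_trans _ _ Hw) as Hw'.
  destruct Ha; cbn [trans Neg approx] in *; try (apply P_ax; [constructor|exact Hw']).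
  - rewrite !trans_subst, !trans_lift in *.
    apply P_ax; [apply TA_ind, wf_trans; auto|exact Hw'].
  - apply trans_comp_axiom; auto.
  - apply trans_ext_axiom; auto.
Qed.

Theorem trans_sound e s p : Prov true s p -> Prov e s (trans p).
Proof.
  induction 1 as [p Hl Hw|p Ha Hw|p q _ IH1 _ IH2|n p Hn _ IH].
  - apply trans_logax; auto.
  - apply trans_tiax; auto.
  - exact (P_mp _ _ _ _ IH1 IH2).
  - apply P_gen; auto.
Qed.

Lemma Prov_iter_All e s k m q : m <= s -> Prov e s q -> Prov e s (Nat.iter k (All m) q).
Proof. intros; induction k; [assumption|]. rewrite Nat.iter_succ; apply P_gen; auto. Qed.

Theorem lemma12p1 (s : nat) (phi : form) :
  wf s phi -> TI_prov s phi -> TIstar_prov s (trans (uclose s phi)).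
Proof.
  intros _ Hprov; apply (trans_sound false) in Hprov.
  unfold uclose, TIstar_prov.
  assert (Htypes : forall m, In m (seq 0 (S s)) -> m <= s)
    by (intros m Hm; apply in_seq in Hm; lia).
  induction (seq 0 (S s)) as [|m l IH]; cbn [fold_right]; [exact Hprov|].
  rewrite trans_iter_All; apply Prov_iter_All; [apply Htypes; left; auto|].
  apply IH; intros; apply Htypes; right; auto.
Qed.
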